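(* Let $n\ge2$. Let $Y$ have a continuous distribution function $G$ on $[l_G,r_G]$, and let $g$ be positive, continuous and strictly decreasing on $(l_G,r_G)$ with $\lim_{y\to r_G^-}g(y)=0$; put $\tau=\lim_{y\to l_G^+}[g(y)]^{-2}$. Then \[ E[g(Y(n))\mid Y(n-1)=s,\ Y(n+1)=t]=\frac{2g(s)g(t)}{g(s)+g(t)}\qquad (l_G<s<t<r_G) \] holds if and only if $G(y)=1-\exp\{-c([g(y)]^{-2}-\tau)\}$ for $l_G<y<r_G$, for some constant $c>0$.
   Context: $Y_1,Y_2,\dots$ are i.i.d. copies of $Y$ with distribution function $G$; $l_G=\inf\{y:G(y)>0\}$, $r_G=\sup\{y:G(y)<1\}$. Upper record times $L(1)=1$, $L(m)=\min\{j>L(m-1):Y_j>Y_{L(m-1)}\}$, record values $Y(m)=Y_{L(m)}$. With $R(y)=-\ln(1-G(y))$, conditional expectations given $Y(n-1)=s$, $Y(n+1)=t$ use the conditional density of $Y(n)$: $\frac{R'(x)}{R(t)-R(s)}$, $s<x<t$. *)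

From Stdlib Require Import Reals.
Open Scope R_scope.

Definition cont_distribution (G : R -> R) : Prop :=
  (forall x y, x <= y -> G x <= G y) /\
  continuity G /\
  (forall eps, 0 < eps -> exists M, forall x, x <= M -> Rabs (G x) < eps) /\
  (forall eps, 0 < eps -> exists M, forall x, M <= x -> Rabs (G x - 1) < eps).

(* For a continuous distribution function G, y lies in the open interval
   (l_G, r_G) iff 0 < G y < 1  (l_G = inf{G>0}, r_G = sup{G<1}); this
   also covers the cases l_G = -oo, r_G = +oo. *)
Definition inside (G : R -> R) (y : R) : Prop := 0 < G y /\ G y < 1.

Definition Rfun (G : R -> R) (y : R) : R := - ln (1 - G y).

Fixpoint RS_sum (f F : R -> R) (p xi : nat -> R) (n : nat) : R :=
  match n with
  | O => 0
  | S k => RS_sum f F p xi k + f (xi k) * (F (p (S k)) - F (p k))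
  end.

Definition is_RS_integral (f F : R -> R) (a b I : R) : Prop :=
  forall eps, 0 < eps -> exists delta, 0 < delta /\
    forall (n : nat) (p xi : nat -> R),
      p 0%nat = a -> p n = b ->
      (forall i, (i < n)%nat ->
         p i <= xi i <= p (S i) /\ p (S i) - p i < delta) ->
      Rabs (RS_sum f F p xi n - I) < eps.

(* E[g(Y(n)) | Y(n-1)=s, Y(n+1)=t] = v, where the conditional law of Y(n)
   is dR(x)/(R(t)-R(s)) on (s,t) (density R'(x)/(R(t)-R(s)) when R is
   differentiable). *)
Definition cond_exp_record (G g : R -> R) (s t v : R) : Prop :=
  exists I, is_RS_integral g (Rfun G) s t I /\
            v = I / (Rfun G t - Rfun G s).

(* Write R = -ln (1 - G) (the function Rfun) and w = g^(-2).  The conditional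
   expectation E[g(Y(n)) | Y(n-1) = s, Y(n+1) = t] is the Riemann-Stieltjes
   mean of g against dR over (s, t).

   (=>) For s < m < t the Stieltjes integral is additive, so the prescribed
   harmonic means force the three-point relation
     (R m - R s) (w t - w m) = (R t - R m) (w m - w s),
   i.e. R is an affine function c w + d of w on (l_G, r_G), with c > 0
   because R increases strictly.  Letting y decrease to l_G we have
   R y -> 0 and w y -> tau, hence d = - c tau: this is the stated form of G.

   (<=) If R = c (u^2 - tau) with u = 1/g, then for x <= xi <= y the term
   g(xi) (R y - R x) equals 2c (u y - u x) up to an error of order
   (u y - u x)^2.  Uniform continuity of u on [s, t] makes the Stieltjes sums
   telescope to 2c (u t - u s); dividing by R t - R s = c (u t^2 - u s^2)
   yields the harmonic mean 2 g(s) g(t) / (g(s) + g(t)).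

   Neither the record index n nor the vanishing of g at r_G is needed. *)

From Stdlib Require Import Reals Lra Lia Psatz.
Open Scope R_scope.

Definition harmonic_mean (a b : R) : R := 2 * a * b / (a + b).

(** * Riemann-Stieltjes sums and integrals *)

(* A partition of [a, b] in n steps of length < d (tagged at left ends). *)
Definition fine_partition (d a b : R) (n : nat) (p : nat -> R) : Prop :=
  p 0%nat = a /\ p n = b /\
  forall i, (i < n)%nat -> p i <= p (S i) /\ p (S i) - p i < d.

Lemma RS_integral_approx f F a b I eps :
  is_RS_integral f F a b I -> 0 < eps ->
  exists delta, 0 < delta /\ forall d n p, d <= delta ->
    fine_partition d a b n p -> Rabs (RS_sum f F p p n - I) < eps.
Proof.
  intros HI he. destruct (HI eps he) as [delta [hd K]].
  exists delta. split; [exact hd|].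
  intros d n p hdd [h0 [hn hp]]. apply K; [exact h0|exact hn|].
  intros i hi. destruct (hp i hi). split; lra.
Qed.

Lemma uniform_partition a b d : a <= b -> 0 < d ->
  exists n p, fine_partition d a b n p.
Proof.
  intros hab hd.
  destruct (archimed_cor1 (d / (b - a + 1))) as [N [HN HN0]].
  { apply Rdiv_lt_0_compat; lra. }
  assert (HNp : 0 < INR N) by (apply lt_0_INR; lia).
  assert (hstep : 0 <= (b - a) / INR N) by (apply Rle_mult_inv_pos; lra).
  exists N, (fun i => a + INR i * ((b - a) / INR N)).
  split; [|split].
  - simpl. lra.
  - field. lra.
  - intros i _. rewrite S_INR. split; [nra|].
    replace (a + (INR i + 1) * ((b - a) / INR N) - (a + INR i * ((b - a) / INR N)))
      with ((b - a) * / INR N) by (field; lra).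
    apply Rle_lt_trans with ((b - a) * (d / (b - a + 1))).
    + apply Rmult_le_compat_l; lra.
    + apply Rlt_le_trans with ((b - a + 1) * (d / (b - a + 1))).
      * apply Rmult_lt_compat_r; [apply Rdiv_lt_0_compat|]; lra.
      * right; field; lra.
Qed.

Lemma RS_sum_ext f F p p' xi xi' n :
  (forall i, (i <= n)%nat -> p i = p' i) -> (forall i, (i < n)%nat -> xi i = xi' i) ->
  RS_sum f F p xi n = RS_sum f F p' xi' n.
Proof.
  induction n as [|n IH]; intros hp hxi; simpl; [reflexivity|].
  rewrite IH by (intros; apply hp || apply hxi; lia).
  rewrite (hp n), (hp (S n)), (hxi n) by lia. reflexivity.
Qed.

Lemma RS_sum_shift f F p xi N k :
  RS_sum f F p xi (N + k) = RS_sum f F p xi N +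
    RS_sum f F (fun i => p (N + i)%nat) (fun i => xi (N + i)%nat) k.
Proof.
  induction k as [|k IH]; simpl.
  - rewrite Nat.add_0_r; lra.
  - rewrite Nat.add_succ_r. simpl. rewrite IH. lra.
Qed.

Definition concat (n1 : nat) (p1 p2 : nat -> R) (i : nat) : R :=
  if Nat.leb i n1 then p1 i else p2 (i - n1)%nat.

Lemma concat_partition f F d a m b n1 n2 p1 p2 :
  fine_partition d a m n1 p1 -> fine_partition d m b n2 p2 ->
  fine_partition d a b (n1 + n2) (concat n1 p1 p2) /\
  RS_sum f F (concat n1 p1 p2) (concat n1 p1 p2) (n1 + n2) =
  RS_sum f F p1 p1 n1 + RS_sum f F p2 p2 n2.
Proof.
  intros [a1 [b1 c1]] [a2 [b2 c2]].
  assert (right_part : forall i, concat n1 p1 p2 (n1 + i)%nat = p2 i).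
  { intros i. unfold concat. destruct (Nat.leb_spec (n1 + i) n1).
    - assert (i = 0%nat) by lia. subst. rewrite Nat.add_0_r. congruence.
    - f_equal. lia. }
  assert (left_part : forall i, (i <= n1)%nat -> concat n1 p1 p2 i = p1 i).
  { intros i hi. unfold concat. destruct (Nat.leb_spec i n1); [reflexivity|lia]. }
  split; [split; [|split]|].
  - rewrite left_part by lia. exact a1.
  - rewrite right_part. exact b2.
  - intros i hi. destruct (Nat.lt_ge_cases i n1) as [h|h].
    + rewrite !left_part by lia. apply c1; exact h.
    + replace i with (n1 + (i - n1))%nat by lia.
      rewrite <- Nat.add_succ_r, !right_part. apply c2. lia.
  - rewrite RS_sum_shift. f_equal.
    + apply RS_sum_ext; intros; apply left_part; lia.
    + apply RS_sum_ext; intros; apply right_part.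
Qed.

Lemma RS_integral_additive f F a m b I1 I2 I : a <= m -> m <= b ->
  is_RS_integral f F a m I1 -> is_RS_integral f F m b I2 ->
  is_RS_integral f F a b I -> I = I1 + I2.
Proof.
  intros ham hmb H1 H2 H. apply cond_eq. intros eps he.
  destruct (RS_integral_approx _ _ _ _ _ (eps / 3) H1) as [d1 [hd1 K1]]; [lra|].
  destruct (RS_integral_approx _ _ _ _ _ (eps / 3) H2) as [d2 [hd2 K2]]; [lra|].
  destruct (RS_integral_approx _ _ _ _ _ (eps / 3) H) as [d [hd K]]; [lra|].
  set (e := Rmin d (Rmin d1 d2)).
  assert (he1 : e <= d) by apply Rmin_l.
  assert (he2 : e <= d1) by (eapply Rle_trans; [apply Rmin_r|apply Rmin_l]).
  assert (he3 : e <= d2) by (eapply Rle_trans; [apply Rmin_r|apply Rmin_r]).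
  assert (hep : 0 < e) by (unfold e; repeat apply Rmin_glb_lt; assumption).
  destruct (uniform_partition a m e ham hep) as [n1 [p1 P1]].
  destruct (uniform_partition m b e hmb hep) as [n2 [p2 P2]].
  destruct (concat_partition f F e a m b n1 n2 p1 p2 P1 P2) as [P Hsum].
  specialize (K1 e n1 p1 he2 P1). specialize (K2 e n2 p2 he3 P2).
  specialize (K e _ _ he1 P). rewrite Hsum in K.
  revert K1 K2 K. unfold Rabs. repeat destruct Rcase_abs; lra.
Qed.

Lemma partition_monotone (p xi : nat -> R) n :
  (forall i, (i < n)%nat -> p i <= xi i <= p (S i)) ->
  forall i j, (i <= j)%nat -> (j <= n)%nat -> p i <= p j.
Proof.
  intros H i j hij. induction hij as [|j hij IH]; intros hj; [lra|].
  destruct (H j ltac:(lia)). specialize (IH ltac:(lia)). lra.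
Qed.

Lemma RS_sum_telescope_bound (f F V U : R -> R) eps (p xi : nat -> R) n :
  (forall i, (i < n)%nat ->
     Rabs (f (xi i) * (F (p (S i)) - F (p i)) - (V (p (S i)) - V (p i)))
       <= eps * (U (p (S i)) - U (p i))) ->
  Rabs (RS_sum f F p xi n - (V (p n) - V (p 0%nat)))
    <= eps * (U (p n) - U (p 0%nat)).
Proof.
  induction n as [|n IH]; intros Hstep; simpl.
  - replace (0 - (V (p 0%nat) - V (p 0%nat))) with 0 by ring.
    rewrite Rabs_R0. lra.
  - assert (Hprev := IH (fun i hi => Hstep i ltac:(lia))).
    assert (Hlast := Hstep n ltac:(lia)).
    set (T := f (xi n) * (F (p (S n)) - F (p n))) in *.
    replace (RS_sum f F p xi n + T - (V (p (S n)) - V (p 0%nat))) with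
      ((RS_sum f F p xi n - (V (p n) - V (p 0%nat))) + (T - (V (p (S n)) - V (p n))))
      by ring.
    eapply Rle_trans; [apply Rabs_triang|]. lra.
Qed.

Lemma RS_integral_of_local_estimate (f F V U : R -> R) a b :
  U a <= U b ->
  (forall eps, 0 < eps -> exists delta, 0 < delta /\
     forall x xi y, a <= x -> x <= xi -> xi <= y -> y <= b -> y - x < delta ->
       Rabs (f xi * (F y - F x) - (V y - V x)) <= eps * (U y - U x)) ->
  is_RS_integral f F a b (V b - V a).
Proof.
  intros HU Hloc eps he.
  set (eps' := eps / (U b - U a + 1)).
  assert (he' : 0 < eps') by (apply Rdiv_lt_0_compat; lra).
  destruct (Hloc eps' he') as [delta [hd Hd]].
  exists delta. split; [exact hd|].
  intros n p xi hp0 hpn Hpx.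
  assert (Htag : forall i, (i < n)%nat -> p i <= xi i <= p (S i))
    by (intros i hi; apply Hpx; exact hi).
  assert (Hrange : forall i, (i <= n)%nat -> a <= p i <= b).
  { intros i hi. rewrite <- hp0, <- hpn.
    split; apply (partition_monotone p xi n Htag); lia. }
  assert (Hsum := RS_sum_telescope_bound f F V U eps' p xi n).
  rewrite hp0, hpn in Hsum.
  eapply Rle_lt_trans; [apply Hsum|].
  - intros i hi. destruct (Hpx i hi) as [[h1 h2] h3].
    apply Hd; try lra; [apply (Hrange i)|apply (Hrange (S i))]; lia.
  - unfold eps'.
    replace (eps / (U b - U a + 1) * (U b - U a))
      with (eps * ((U b - U a) / (U b - U a + 1))) by (field; lra).
    assert ((U b - U a) / (U b - U a + 1) < 1)
      by (apply Rmult_lt_reg_r with (U b - U a + 1); [lra|];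
          unfold Rdiv; rewrite Rmult_assoc, Rinv_l; lra).
    nra.
Qed.

(** * Continuous distribution functions *)

Lemma inside_between G x m y : cont_distribution G -> inside G x -> inside G y ->
  x <= m -> m <= y -> inside G m.
Proof.
  intros [Hm _] [a b] [c d] h1 h2. split.
  - apply Rlt_le_trans with (G x); auto.
  - apply Rle_lt_trans with (G y); auto.
Qed.

Lemma Rfun_monotone G x y : cont_distribution G -> inside G x -> inside G y ->
  x <= y -> Rfun G x <= Rfun G y.
Proof.
  intros [Hm _] [_ hx] [_ hy] hxy. unfold Rfun.
  assert (G x <= G y) by (apply Hm; exact hxy).
  destruct (Req_dec (G x) (G y)) as [e|ne]; [rewrite e; lra|].
  assert (ln (1 - G y) < ln (1 - G x)) by (apply ln_increasing; lra). lra.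
Qed.

Lemma Rfun_eq_iff G y r : G y < 1 -> (Rfun G y = r <-> G y = 1 - exp (- r)).
Proof.
  intros hy. unfold Rfun. split; intros E.
  - rewrite <- E, Ropp_involutive, exp_ln by lra. ring.
  - replace (1 - G y) with (exp (- r)) by lra. rewrite ln_exp. ring.
Qed.

Lemma exists_inside_below G y0 eta : cont_distribution G -> inside G y0 -> 0 < eta ->
  exists y, inside G y /\ y < y0 /\ G y < eta.
Proof.
  intros [_ [Hc [Hl _]]] [h0 h1] heta.
  set (e := Rmin eta (G y0) / 2).
  assert (he : 0 < e /\ e < eta /\ e < G y0).
  { assert (Rmin eta (G y0) <= eta) by apply Rmin_l.
    assert (Rmin eta (G y0) <= G y0) by apply Rmin_r.
    assert (0 < Rmin eta (G y0)) by (apply Rmin_glb_lt; lra).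
    unfold e; lra. }
  destruct (Hl e) as [M HM]; [lra|].
  set (x := Rmin M (y0 - 1)).
  assert (hx : x < y0) by (assert (x <= y0 - 1) by apply Rmin_r; lra).
  assert (Gx : G x < e)
    by (apply Rle_lt_trans with (Rabs (G x)); [apply RRle_abs|apply HM, Rmin_l]).
  destruct (IVT (fun z => G z - e) x y0) as [z [[hxz hzy] Hz]].
  - apply continuity_minus; [exact Hc|].
    apply continuity_const. intros ? ?; reflexivity.
  - exact hx.
  - lra.
  - lra.
  - exists z. destruct hzy as [hzy|hzy].
    + split; [split|split]; lra.
    + subst z. lra.
Qed.

Lemma Rfun_small_below G y0 r : cont_distribution G -> inside G y0 -> 0 < r ->
  exists y, inside G y /\ y < y0 /\ 0 <= Rfun G y < r.
Proof.
  intros HG Hy0 hr.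
  assert (hexp : exp (- r) < 1) by (rewrite <- exp_0; apply exp_increasing; lra).
  destruct (exists_inside_below G y0 (1 - exp (- r)) HG Hy0) as [y [Hy [hyy0 hGy]]];
    [lra|].
  exists y. split; [exact Hy|split; [exact hyy0|]].
  destruct Hy as [hy1 hy2]. unfold Rfun. split.
  - assert (ln (1 - G y) < ln 1) by (apply ln_increasing; lra).
    rewrite ln_1 in *. lra.
  - assert (ln (exp (- r)) < ln (1 - G y)) by (apply ln_increasing; [apply exp_pos|lra]).
    rewrite ln_exp in *. lra.
Qed.

(** * Algebra of harmonic means *)

Lemma harmonic_mean_additivity gs gm gt A B : 0 < gs -> 0 < gm -> 0 < gt ->
  harmonic_mean gs gt * (A + B) = harmonic_mean gs gm * A + harmonic_mean gm gt * B ->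
  A * (/ (gt ^ 2) - / (gm ^ 2)) = B * (/ (gm ^ 2) - / (gs ^ 2)).
Proof.
  unfold harmonic_mean. intros h1 h2 h3 E.
  assert (K : A * (/ (gt ^ 2) - / (gm ^ 2)) - B * (/ (gm ^ 2) - / (gs ^ 2)) =
     - (/ gs + / gt) * (/ gs + / gm) * (/ gm + / gt) / 2 *
     (2 * gs * gt / (gs + gt) * (A + B) -
      (2 * gs * gm / (gs + gm) * A + 2 * gm * gt / (gm + gt) * B))).
  { field. repeat split; lra. }
  rewrite E, Rminus_diag, Rmult_0_r in K. lra.
Qed.

Lemma three_point_affine (P : R -> Prop) (Rf w : R -> R) a b :
  (forall x y z, P x -> P y -> P z -> x < y -> y < z ->
     (Rf y - Rf x) * (w z - w y) = (Rf z - Rf y) * (w y - w x)) ->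
  (forall x y, P x -> P y -> x < y -> w x < w y) ->
  P a -> P b -> a < b -> Rf a < Rf b ->
  exists c d, 0 < c /\ forall y, P y -> Rf y = c * w y + d.
Proof.
  intros H3 Hw Pa Pb hab hR.
  assert (hw := Hw a b Pa Pb hab).
  set (c := (Rf b - Rf a) / (w b - w a)).
  exists c, (Rf a - c * w a). split; [apply Rdiv_lt_0_compat; lra|].
  intros y Py.
  assert (N : (Rf y - Rf a) * (w b - w a) = (Rf b - Rf a) * (w y - w a)).
  { destruct (Rtotal_order y a) as [h|[h|h]].
    - specialize (H3 y a b Py Pa Pb h hab). nra.
    - subst; ring.
    - destruct (Rtotal_order y b) as [h'|[h'|h']].
      + specialize (H3 a y b Pa Py Pb h h'). nra.
      + subst; ring.
      + specialize (H3 a b y Pa Pb Py hab h'). nra. }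
  unfold c. apply Rmult_eq_reg_r with (w b - w a); [|lra].
  transitivity (Rf a * (w b - w a) + (Rf b - Rf a) * (w y - w a)); [lra|].
  field. lra.
Qed.

(** * From harmonic conditional means to the form of G *)

(* A harmonic conditional mean over (s, t) is a genuine Stieltjes integral,
   and R increases strictly from s to t (otherwise the mean would be 0). *)
Lemma harmonic_record_integral G g s t : cont_distribution G ->
  inside G s -> inside G t -> s < t -> 0 < g s -> 0 < g t ->
  cond_exp_record G g s t (harmonic_mean (g s) (g t)) ->
  Rfun G s < Rfun G t /\
  is_RS_integral g (Rfun G) s t (harmonic_mean (g s) (g t) * (Rfun G t - Rfun G s)).
Proof.
  intros HG hs ht hst gs gt [I [HI HE]].
  assert (hpos : 0 < harmonic_mean (g s) (g t))
    by (unfold harmonic_mean; apply Rdiv_lt_0_compat; nra).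
  destruct (Rfun_monotone G s t HG hs ht (Rlt_le _ _ hst)) as [hlt|heq].
  - split; [exact hlt|]. replace (harmonic_mean (g s) (g t) * (Rfun G t - Rfun G s))
      with I by (rewrite HE; field; lra). exact HI.
  - rewrite heq, Rminus_diag in HE. unfold Rdiv in HE.
    rewrite Rinv_0, Rmult_0_r in HE. lra.
Qed.

Lemma harmonic_affine G g a b : cont_distribution G ->
  (forall y, inside G y -> 0 < g y) ->
  (forall x y, inside G x -> inside G y -> x < y -> g y < g x) ->
  (forall s t, inside G s -> inside G t -> s < t ->
      cond_exp_record G g s t (harmonic_mean (g s) (g t))) ->
  inside G a -> inside G b -> a < b ->
  exists c d, 0 < c /\ forall y, inside G y -> Rfun G y = c * / (g y ^ 2) + d.
Proof.
  intros HG Hpos Hdec Hce Ha Hb hab.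
  assert (record : forall s t, inside G s -> inside G t -> s < t ->
    Rfun G s < Rfun G t /\ is_RS_integral g (Rfun G) s t
      (harmonic_mean (g s) (g t) * (Rfun G t - Rfun G s)))
    by (intros s t hs ht hst; apply harmonic_record_integral; auto).
  apply (three_point_affine (inside G) (Rfun G) (fun y => / (g y ^ 2)) a b);
    try assumption.
  - intros x y z hx hy hz hxy hyz.
    destruct (record x y hx hy hxy) as [_ Ixy].
    destruct (record y z hy hz hyz) as [_ Iyz].
    destruct (record x z hx hz (Rlt_trans _ _ _ hxy hyz)) as [_ Ixz].
    assert (additive := RS_integral_additive _ _ _ _ _ _ _ _
      (Rlt_le _ _ hxy) (Rlt_le _ _ hyz) Ixy Iyz Ixz).
    apply harmonic_mean_additivity; auto.
    replace (Rfun G y - Rfun G x + (Rfun G z - Rfun G y))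
      with (Rfun G z - Rfun G x) by ring.
    exact additive.
  - intros x y hx hy hxy.
    assert (h1 := Hpos x hx). assert (h2 := Hpos y hy).
    assert (h3 := Hdec x y hx hy hxy).
    apply Rinv_lt_contravar; [apply Rmult_lt_0_compat; apply pow_lt; lra|]. nra.
  - apply record; assumption.
Qed.

(* If R = c w + d with c > 0 and w tends to tau at l_G, then d = - c tau,
   because R tends to 0 at l_G. *)
Lemma affine_constant_at_left_end G (w : R -> R) tau c d : cont_distribution G ->
  0 < c ->
  (forall eps, 0 < eps -> exists y0, inside G y0 /\
     forall y, inside G y -> y < y0 -> Rabs (w y - tau) < eps) ->
  (forall y, inside G y -> Rfun G y = c * w y + d) ->
  d = - c * tau.
Proof.
  intros HG hc Htau Haff. apply cond_eq. intros eps he.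
  destruct (Htau (eps / (2 * c))) as [y1 [Hy1 Hw]]; [apply Rdiv_lt_0_compat; lra|].
  destruct (Rfun_small_below G y1 (eps / 2) HG Hy1) as [y [Hy [hyy1 hR]]]; [lra|].
  specialize (Hw y Hy hyy1).
  replace (d - - c * tau) with (Rfun G y - c * (w y - tau)) by (rewrite (Haff y Hy); ring).
  assert (Rabs (c * (w y - tau)) < eps / 2).
  { rewrite Rabs_mult, (Rabs_right c) by lra.
    apply Rlt_le_trans with (c * (eps / (2 * c))).
    - apply Rmult_lt_compat_l; assumption.
    - right; field; lra. }
  eapply Rle_lt_trans; [apply Rabs_triang|]. rewrite Rabs_Ropp, Rabs_right by lra. lra.
Qed.

(** * From the form of G to harmonic conditional means *)

(* One Stieltjes term for R = c (u^2 - tau): with b = u x <= a = u y and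
   gx = g xi between 1/a and 1/b, the term gx c (a^2 - b^2) is 2 c (a - b)
   up to c (a - b)^2 / m, for any lower bound m > 0 of b. *)
Lemma harmonic_step_estimate c m gx a b : 0 < c -> 0 < m -> m <= b -> b <= a ->
  0 < gx -> 1 <= gx * a -> gx * b <= 1 ->
  Rabs (gx * (c * (a ^ 2 - b ^ 2)) - 2 * c * (a - b)) <= c * (a - b) / m * (a - b).
Proof.
  intros hc hm hb hab hg h1 h2.
  assert (hgm : gx <= / m).
  { apply Rmult_le_reg_r with m; [exact hm|]. rewrite Rinv_l by lra. nra. }
  replace (gx * (c * (a ^ 2 - b ^ 2)) - 2 * c * (a - b))
    with (c * (a - b) * (gx * (a + b) - 2)) by ring.
  rewrite Rabs_mult, Rabs_right by nra.
  assert (Rabs (gx * (a + b) - 2) <= gx * (a - b)) by (apply Rabs_le; nra).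
  assert (gx * (a - b) <= / m * (a - b)) by nra.
  replace (c * (a - b) / m * (a - b)) with (c * (a - b) * (/ m * (a - b)))
    by (field; lra).
  apply Rmult_le_compat_l; nra.
Qed.

Lemma harmonic_record_of_form G g tau c s t :
  cont_distribution G ->
  (forall y, inside G y -> 0 < g y) ->
  (forall y, inside G y -> continuity_pt g y) ->
  (forall x y, inside G x -> inside G y -> x < y -> g y < g x) ->
  0 < c ->
  (forall y, inside G y -> Rfun G y = c * (/ (g y ^ 2) - tau)) ->
  inside G s -> inside G t -> s < t ->
  cond_exp_record G g s t (harmonic_mean (g s) (g t)).
Proof.
  intros HG Hpos Hcont Hdec hc HR hs ht hst.
  set (u := fun y => / g y).
  assert (Hin : forall x, s <= x <= t -> inside G x)
    by (intros x [h1 h2]; apply inside_between with s t; assumption).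
  assert (Hg : forall x y, s <= x <= t -> s <= y <= t -> x <= y -> g y <= g x).
  { intros x y hx hy [h|h]; [|subst; lra]. left; apply Hdec; auto. }
  assert (Hu : forall x y, s <= x <= t -> s <= y <= t -> x <= y -> u x <= u y).
  { intros x y hx hy hxy. unfold u.
    apply Rinv_le_contravar; [apply Hpos, Hin, hy|apply Hg; assumption]. }
  assert (gs := Hpos s hs). assert (gt := Hpos t ht).
  assert (hgst := Hdec s t hs ht hst).
  assert (hus : 0 < u s) by (apply Rinv_0_lt_compat; exact gs).
  exists (2 * c * u t - 2 * c * u s). split.
  2:{ rewrite (HR s hs), (HR t ht). unfold harmonic_mean, u. field.
      repeat split; try lra. intro h.
      assert (g s ^ 2 - g t ^ 2 = 0) by nra. nra. }
  apply (RS_integral_of_local_estimate g (Rfun G) (fun y => 2 * c * u y) u s t).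
  { apply Hu; lra. }
  intros eps he.
  set (eta := eps * u s / c).
  assert (heta : 0 < eta) by (apply Rdiv_lt_0_compat; nra).
  assert (uniform := Heine u (fun x => s <= x <= t) (compact_P3 s t)).
  destruct uniform with (eps := mkposreal eta heta) as [delta Hd].
  { intros x hx. apply continuity_pt_inv; [apply Hcont, Hin, hx|].
    assert (0 < g x) by (apply Hpos, Hin, hx). lra. }
  exists delta. split; [apply cond_pos|].
  intros x xi y hsx hxxi hxiy hyt hdelta.
  assert (rx : s <= x <= t) by lra. assert (rxi : s <= xi <= t) by lra.
  assert (ry : s <= y <= t) by lra.
  assert (gx := Hpos x (Hin x rx)). assert (gxi := Hpos xi (Hin xi rxi)).
  assert (gy := Hpos y (Hin y ry)).
  assert (close : u y - u x < eta).
  { assert (Rabs (u y - u x) < eta)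
      by (apply (Hd y x ry rx); rewrite Rabs_right; simpl; lra).
    apply Rabs_def2 in H. lra. }
  assert (hux : u s <= u x) by (apply Hu; lra).
  assert (huxy : u x <= u y) by (apply Hu; lra).
  rewrite (HR x (Hin x rx)), (HR y (Hin y ry)).
  replace (c * (/ (g y ^ 2) - tau) - c * (/ (g x ^ 2) - tau))
    with (c * (u y ^ 2 - u x ^ 2)) by (unfold u; rewrite !pow_inv; ring).
  replace (2 * c * u y - 2 * c * u x) with (2 * c * (u y - u x)) by ring.
  eapply Rle_trans.
  - apply (harmonic_step_estimate c (u s)); try assumption.
    + unfold u. rewrite <- (Rinv_r (g y)) by lra.
      apply Rmult_le_compat_r; [apply Rlt_le, Rinv_0_lt_compat; exact gy|].
      apply Hg; assumption.
    + unfold u. rewrite <- (Rinv_r (g x)) by lra.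
      apply Rmult_le_compat_r; [apply Rlt_le, Rinv_0_lt_compat; exact gx|].
      apply Hg; assumption.
  - apply Rmult_le_compat_r; [lra|].
    apply Rmult_le_reg_r with (u s); [exact hus|].
    unfold Rdiv. rewrite Rmult_assoc, Rinv_l by lra.
    unfold eta in close. apply Rlt_le.
    replace (eps * u s) with (c * (eps * u s / c)) by (field; lra). nra.
Qed.

Theorem corollary3 (n : nat) (G g : R -> R) (tau : R) :
  (2 <= n)%nat ->
  cont_distribution G ->
  (* g positive, continuous, strictly decreasing on (l_G, r_G) *)
  (forall y, inside G y -> 0 < g y) ->
  (forall y, inside G y -> continuity_pt g y) ->
  (forall x y, inside G x -> inside G y -> x < y -> g y < g x) ->
  (* lim_{y -> r_G^-} g(y) = 0 *)
  (forall eps, 0 < eps -> exists y0, inside G y0 /\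
     forall y, inside G y -> y0 < y -> Rabs (g y) < eps) ->
  (* tau = lim_{y -> l_G^+} g(y)^(-2) *)
  (forall eps, 0 < eps -> exists y0, inside G y0 /\
     forall y, inside G y -> y < y0 -> Rabs (/ (g y ^ 2) - tau) < eps) ->
  ((forall s t, inside G s -> inside G t -> s < t ->
      cond_exp_record G g s t (2 * g s * g t / (g s + g t)))
   <->
   (exists c, 0 < c /\
      forall y, inside G y -> G y = 1 - exp (- (c * (/ (g y ^ 2) - tau))))).
Proof.
  intros _ HG Hpos Hcont Hdec _ Htau. split.
  - intros Hce.
    destruct (Htau 1 Rlt_0_1) as [b [Hb _]].
    destruct (exists_inside_below G b 1 HG Hb Rlt_0_1) as [a [Ha [hab _]]].
    destruct (harmonic_affine G g a b HG Hpos Hdec Hce Ha Hb hab) as [c [d [hc Haff]]].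
    assert (hd := affine_constant_at_left_end G (fun y => / (g y ^ 2)) tau c d
                    HG hc Htau Haff).
    exists c. split; [exact hc|]. intros y Hy.
    apply Rfun_eq_iff; [apply Hy|]. rewrite (Haff y Hy), hd. ring.
  - intros [c [hc Hform]] s t hs ht hst.
    apply (harmonic_record_of_form G g tau c); try assumption.
    intros y Hy. apply Rfun_eq_iff; [apply Hy|apply Hform, Hy].
Qed.
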